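(* Let $K$ be a field which is finite-dimensional over its center $Z(K)$. Let $L/K$ be a field extension such that $K$ is existentially closed in $L$ and $Z(K)\subset Z(L)$. Then $L/K$ is a regular extension.
   Context: ''Field'' means a not necessarily commutative division ring; $Z(A)$ denotes the center of a ring $A$. $K$ is existentially closed in $L$ if every existential first-order sentence in the language of rings with constants from $K$ which holds in $L$ also holds in $K$. For a field extension $L/K$ and $x\in L$, $K(x)$ is the subfield of $L$ generated by $K$ and $x$; $x$ is algebraic over $K$ if $K(x)$ is finite-dimensional both as a left and as a right $K$-vector space. $L/K$ is regular if every element of $L$ algebraic over $K$ lies in $K$. *)

From HB Require Import structures.
From mathcomp Require Import all_boot all_algebra.
Set Implicit Arguments. Unset Strict Implicit. Unset Printing Implicit Defensive.
Import GRing.Theory.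
Local Open Scope ring_scope.

(* "Field" = (not necessarily commutative) division ring. *)
Definition is_divring (R : unitRingType) : Prop :=
  forall x : R, x != 0 -> x \is a GRing.unit.

Definition central (R : ringType) (z : R) : Prop := forall x : R, z * x = x * z.

Definition findim_over_center (K : ringType) : Prop :=
  exists s : seq K, forall x : K, exists c : seq K,
    size c = size s /\ (forall i, central c`_i) /\
    x = \sum_(i < size s) c`_i * s`_i.

Inductive rterm (R : Type) : Type :=
| RVar of nat
| RConst of R
| RAdd of rterm R & rterm R
| ROpp of rterm R
| RMul of rterm R & rterm R.

(* Existential formulas (positive combinations of atomic and negated atomic
   formulas, with existential quantifiers). *)
Inductive eform (R : Type) : Type :=
| ETrue
| EFalse
| EEq of rterm R & rterm R
| ENeq of rterm R & rterm R
| EAnd of eform R & eform R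
| EOr of eform R & eform R
| EEx of nat & eform R.

Fixpoint reval (R : ringType) (e : nat -> R) (t : rterm R) : R :=
  match t with
  | RVar i => e i
  | RConst c => c
  | RAdd t1 t2 => reval e t1 + reval e t2
  | ROpp t1 => - reval e t1
  | RMul t1 t2 => reval e t1 * reval e t2
  end.

Definition upd (R : Type) (e : nat -> R) (i : nat) (x : R) : nat -> R :=
  fun j => if j == i then x else e j.

Fixpoint eholds (R : ringType) (e : nat -> R) (f : eform R) : Prop :=
  match f with
  | ETrue => True
  | EFalse => False
  | EEq t1 t2 => reval e t1 = reval e t2
  | ENeq t1 t2 => reval e t1 <> reval e t2
  | EAnd f1 f2 => eholds e f1 /\ eholds e f2
  | EOr f1 f2 => eholds e f1 \/ eholds e f2
  | EEx i f1 => exists x : R, eholds (upd e i x) f1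
  end.

Fixpoint rterm_map (A B : Type) (g : A -> B) (t : rterm A) : rterm B :=
  match t with
  | RVar i => RVar B i
  | RConst c => RConst (g c)
  | RAdd t1 t2 => RAdd (rterm_map g t1) (rterm_map g t2)
  | ROpp t1 => ROpp (rterm_map g t1)
  | RMul t1 t2 => RMul (rterm_map g t1) (rterm_map g t2)
  end.

Fixpoint eform_map (A B : Type) (g : A -> B) (f : eform A) : eform B :=
  match f with
  | ETrue => ETrue B
  | EFalse => EFalse B
  | EEq t1 t2 => EEq (rterm_map g t1) (rterm_map g t2)
  | ENeq t1 t2 => ENeq (rterm_map g t1) (rterm_map g t2)
  | EAnd f1 f2 => EAnd (eform_map g f1) (eform_map g f2)
  | EOr f1 f2 => EOr (eform_map g f1) (eform_map g f2)
  | EEx i f1 => EEx i (eform_map g f1)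
  end.

(* Sentences: free variables play no role; we evaluate in the environment
   sending every variable to 0 (a sentence has no free variables). *)
Definition ex_closed (K L : ringType) (f : {rmorphism K -> L}) : Prop :=
  forall phi : eform K,
    eholds (fun _ => 0 : L) (eform_map f phi) -> eholds (fun _ => 0 : K) phi.

Definition center_incl (K L : ringType) (f : {rmorphism K -> L}) : Prop :=
  forall z : K, central z -> central (f z).

Definition divsubring_closed (L : unitRingType) (S : L -> Prop) : Prop :=
  [/\ S 0, S 1, (forall a b, S a -> S b -> S (a - b)),
      (forall a b, S a -> S b -> S (a * b)) & (forall a, S a -> S a^-1)].

Definition adjoin (K L : unitRingType) (f : {rmorphism K -> L}) (x : L) (y : L)
  : Prop :=
  forall S : L -> Prop, divsubring_closed S -> (forall k, S (f k)) -> S x -> S y.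

Definition left_findim (K L : unitRingType) (f : {rmorphism K -> L}) (x : L) :=
  exists s : seq L, (forall i, (i < size s)%N -> adjoin f x s`_i) /\
    forall y, adjoin f x y -> exists c : seq K,
      size c = size s /\ y = \sum_(i < size s) f c`_i * s`_i.

Definition right_findim (K L : unitRingType) (f : {rmorphism K -> L}) (x : L) :=
  exists s : seq L, (forall i, (i < size s)%N -> adjoin f x s`_i) /\
    forall y, adjoin f x y -> exists c : seq K,
      size c = size s /\ y = \sum_(i < size s) s`_i * f c`_i.

Definition algebraic_over (K L : unitRingType) (f : {rmorphism K -> L}) (x : L) :=
  left_findim f x /\ right_findim f x.

Definition regular_ext (K L : unitRingType) (f : {rmorphism K -> L}) : Prop :=
  forall x : L, algebraic_over f x -> exists k : K, x = f k.

(* Let x be algebraic over K (only the left finite-dimensionality of K(x) is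
   needed) and let s_1, ..., s_n be a left K-basis of K(x).  Multiplication in
   K(x) is encoded by finitely many structure constants in K: those of the
   products s_i s_j, of the products s_i e_l for a basis e of K over Z(K), and
   of 1.  The existential sentence asserting that these equations have a
   solution holds in L (witnessed by s), hence in K, say by g_1, ..., g_n.
   Because Z(K) is central in L, the map phi : sum f(c_i) s_i |-> sum c_i g_i
   is a ring morphism K(x) -> K fixing K.  Its kernel is an ideal of the
   division ring K(x) not containing 1, hence zero; since x - f(phi x) lies in
   the kernel, x = f(phi x). *)

From mathcomp Require Import all_boot all_algebra.
From Stdlib Require Import Classical FunctionalExtensionality.
Set Implicit Arguments. Unset Strict Implicit. Unset Printing Implicit Defensive.
Import GRing.Theory.
Local Open Scope ring_scope.

Section Formulas.
Variable R : nzRingType.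
Implicit Types (env : nat -> R) (phi : eform R).

Definition eall (T : finType) (F : T -> eform R) : eform R :=
  foldr (fun t phi => EAnd (F t) phi) (ETrue R) (enum T).

Lemma eholds_eall env (T : finType) (F : T -> eform R) :
  eholds env (eall F) <-> forall t, eholds env (F t).
Proof.
suff holds_foldr r : eholds env (foldr (fun t phi => EAnd (F t) phi) (ETrue R) r)
    <-> {in r, forall t, eholds env (F t)}.
  by rewrite holds_foldr; split=> FP t => [|_]; apply: FP; rewrite ?mem_enum.
elim: r => [|t r IH] /=; first by split=> // _ t; rewrite in_nil.
rewrite IH; split=> [[Ft Fr] u | Fr].
  by rewrite in_cons => /predU1P [-> | /Fr].
by split=> [|u ur]; apply: Fr; rewrite ?mem_head ?in_cons ?ur ?orbT.
Qed.

Definition lin_term n (c : 'I_n -> R) : rterm R :=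
  foldr (fun k t => RAdd (RMul (RConst (c k)) (RVar R k)) t) (RConst 0) (enum 'I_n).

Lemma reval_lin_term env n (c : 'I_n -> R) :
  reval env (lin_term c) = \sum_(k < n) c k * env k.
Proof.
rewrite /lin_term -big_enum /=.
by elim: (enum _) => [|k r IH] /=; rewrite ?big_nil ?big_cons ?IH.
Qed.

Fixpoint exs (n : nat) phi : eform R :=
  if n is k.+1 then EEx k (exs k phi) else phi.

Lemma eholds_exs env n phi :
  eholds env (exs n phi) <->
  exists g : nat -> R, eholds (fun j => if (j < n)%N then g j else env j) phi.
Proof.
elim: n env => [|n IH] env /=.
  by split=> [|[g]]; [exists (fun=> 0) | ].
have prefix_upd (g : nat -> R) x :
    (fun j => if (j < n)%N then g j else upd env n x j) =
    (fun j => if (j < n.+1)%N then upd g n x j else env j).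
  apply: functional_extensionality => j; rewrite /upd ltnS.
  by case: ltngtP.
split=> [[x /IH [g]] | [g gP]]; first by rewrite prefix_upd; exists (upd g n x).
exists (g n); apply/IH; exists g; rewrite prefix_upd.
suff -> : upd g n (g n) = g by [].
by apply: functional_extensionality => j; rewrite /upd; case: eqP => [->|].
Qed.

Definition struct_form n m (a : 'I_n * 'I_n -> 'I_n -> R)
    (b : 'I_n * 'I_m -> 'I_n -> R) (e : 'I_m -> R) (o : 'I_n -> R) : eform R :=
  EAnd (eall (fun p : 'I_n * 'I_n =>
          EEq (RMul (RVar R p.1) (RVar R p.2)) (lin_term (a p))))
  (EAnd (eall (fun p : 'I_n * 'I_m =>
          EEq (RMul (RVar R p.1) (RConst (e p.2))) (lin_term (b p))))
        (EEq (RConst 1) (lin_term o))).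

Lemma eholds_struct_form env n m a b (e : 'I_m -> R) o (x : 'I_n -> R) :
  (forall i : 'I_n, env i = x i) ->
  eholds env (struct_form a b e o) <->
  [/\ forall i j, x i * x j = \sum_k a (i, j) k * x k,
      forall i l, x i * e l = \sum_k b (i, l) k * x k &
      1 = \sum_k o k * x k].
Proof.
move=> env_x; have lin_x c : reval env (lin_term c) = \sum_k c k * x k.
  by rewrite reval_lin_term; apply: eq_bigr => k _; rewrite env_x.
rewrite /struct_form /= !eholds_eall /= lin_x.
split=> [[ax [bx ox]] | [ax bx ox]].
  split=> // [i j | i l]; [have := ax (i, j) | have := bx (i, l)];
    by rewrite /= !env_x lin_x.
by split=> [[i j] | ]; [|split=> // -[i l]]; rewrite /= !env_x lin_x.
Qed.

End Formulas.

Section FormulaMap.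
Variables (A B : nzRingType) (f : {rmorphism A -> B}).

Lemma eform_map_eall (T : finType) (F : T -> eform A) :
  eform_map f (eall F) = eall (fun t => eform_map f (F t)).
Proof. by rewrite /eall; elim: (enum T) => //= t r ->. Qed.

Lemma rterm_map_lin_term n (c : 'I_n -> A) :
  rterm_map f (lin_term c) = lin_term (f \o c).
Proof. by rewrite /lin_term; elim: (enum _) => [|k r /= ->]; rewrite /= ?rmorph0. Qed.

Lemma eform_map_exs n (phi : eform A) :
  eform_map f (exs n phi) = exs n (eform_map f phi).
Proof. by elim: n => //= n ->. Qed.

Lemma eform_map_struct_form n m a b (e : 'I_m -> A) (o : 'I_n -> A) :
  eform_map f (struct_form a b e o) =
  struct_form (fun p => f \o a p) (fun p => f \o b p) (f \o e) (f \o o).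
Proof.
rewrite /struct_form /= !eform_map_eall rterm_map_lin_term rmorph1.
by congr (EAnd _ (EAnd _ _)); congr eall; apply: functional_extensionality => p;
  rewrite /= rterm_map_lin_term.
Qed.

End FormulaMap.

Section LeftSpan.
Variables (K L : unitRingType) (f : {rmorphism K -> L}).

Definition lcomb n (c : 'I_n -> K) (s : 'I_n -> L) : L := \sum_i f (c i) * s i.

Definition lspan (A : L -> Prop) n (s : 'I_n -> L) : Prop :=
  forall y, A y -> exists c, y = lcomb c s.

Definition lfree n (s : 'I_n -> L) : Prop :=
  forall c, lcomb c s = 0 -> forall i, c i = 0.

Lemma lspan_drop (A : L -> Prop) n (s : 'I_n.+1 -> L) c i :
  is_divring K -> lcomb c s = 0 -> c i != 0 -> lspan A s -> lspan A (s \o lift i).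
Proof.
move=> divK c0 ci s_span y /s_span [d ->].
have s_i : s i = - \sum_k f ((c i)^-1 * c (lift i k)) * s (lift i k).
  move: c0; rewrite /lcomb (bigD1_ord i) //= => /eqP; rewrite addr_eq0 => /eqP ci_si.
  rewrite -[s i]mul1r -(rmorph1 f) -(mulVr (divK _ ci)) rmorphM -mulrA ci_si.
  by rewrite mulrN mulr_sumr; congr (- _); apply: eq_bigr => k _; rewrite rmorphM mulrA.
exists (fun k => d (lift i k) - d i * ((c i)^-1 * c (lift i k))).
rewrite /lcomb (bigD1_ord i) //= s_i mulrN mulr_sumr addrC -sumrB.
by apply: eq_bigr => k _; rewrite rmorphB mulrBl (rmorphM f (d i)) mulrA.
Qed.

Lemma exists_lbasis (A : L -> Prop) n (s : 'I_n -> L) :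
  is_divring K -> (forall i, A (s i)) -> lspan A s ->
  exists m (t : 'I_m -> L), [/\ forall i, A (t i), lspan A t & lfree t].
Proof.
move=> divK; elim: n s => [|n IH] s sA s_span; first by exists 0, s; split=> // c _ [].
have [s_free | s_dep] := classic (lfree s); first by exists n.+1, s.
have [c [i [c0 ci]]] : exists c i, lcomb c s = 0 /\ c i != 0.
  apply: NNPP => no_dep; apply: s_dep => c c0 i.
  by case: (eqVneq (c i) 0) => // ci; case: no_dep; exists c, i.
by apply: (IH (s \o lift i)) => [k | ]; [apply: sA | apply: lspan_drop ci _].
Qed.

(* The graph of the coordinate map sum_i f(c_i) s_i |-> sum_i c_i g_i, as a
   relation so that no choice of coordinates is needed. *)
Definition coord_rel n (s : 'I_n -> L) (g : 'I_n -> K) (u : L) (k : K) : Prop :=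
  exists c, u = lcomb c s /\ k = \sum_i c i * g i.

End LeftSpan.

Section CoordRel.
Variables (K L : unitRingType) (f : {rmorphism K -> L}).
Variables (n : nat) (s : 'I_n -> L) (g : 'I_n -> K).
Local Notation rel := (coord_rel f s g).
Implicit Types (u v : L) (k : K).

Lemma coord_rel0 : rel 0 0.
Proof.
by exists (fun=> 0); split; rewrite /lcomb big1 // => i _; rewrite ?rmorph0 mul0r.
Qed.

Lemma coord_relD u k v k' : rel u k -> rel v k' -> rel (u + v) (k + k').
Proof.
move=> [c [-> ->]] [d [-> ->]]; exists (fun i => c i + d i).
by rewrite /lcomb -!big_split; split; apply: eq_bigr => i _; rewrite ?rmorphD mulrDl.
Qed.

Lemma coord_relZ d u k : rel u k -> rel (f d * u) (d * k).
Proof.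
move=> [c [-> ->]]; exists (fun i => d * c i).
by rewrite /lcomb !mulr_sumr; split; apply: eq_bigr => i _; rewrite ?rmorphM mulrA.
Qed.

Lemma coord_relN u k : rel u k -> rel (- u) (- k).
Proof. by move/(coord_relZ (-1)); rewrite rmorphN1 !mulN1r. Qed.

Lemma coord_rel_sum (I : Type) (r : seq I) (P : pred I) (F : I -> L) (G : I -> K) :
  (forall i, P i -> rel (F i) (G i)) ->
  rel (\sum_(i <- r | P i) F i) (\sum_(i <- r | P i) G i).
Proof. exact: (big_ind2 rel coord_rel0 coord_relD). Qed.

Lemma coord_rel_functional u k k' : lfree f s -> rel u k -> rel u k' -> k = k'.
Proof.
move=> s_free [c [-> ->]] [d [cd ->]].
have cd0 : lcomb f (fun i => c i - d i) s = 0.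
  rewrite -[RHS](subrr (lcomb f c s)) {2}cd /lcomb -sumrB.
  by apply: eq_bigr => i _; rewrite rmorphB mulrBl.
by apply: eq_bigr => i _; have /eqP := s_free _ cd0 i; rewrite subr_eq0 => /eqP ->.
Qed.

Variables (m : nat) (e : 'I_m -> K).
Hypothesis f_center : center_incl f.
Hypothesis e_span :
  forall d, exists z : 'I_m -> K, (forall l, central (z l)) /\ d = \sum_l z l * e l.
Hypothesis rel_ss : forall i j, rel (s i * s j) (g i * g j).
Hypothesis rel_se : forall i l, rel (s i * f (e l)) (g i * e l).
Hypothesis rel11 : rel 1 1.

Lemma coord_rel_f d : rel (f d) d.
Proof. by have := coord_relZ d rel11; rewrite !mulr1. Qed.

(* Writing d = sum_l z_l e_l with z_l central in K, hence f(z_l) central in L,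
   gives s_i f(d) = sum_l f(z_l) (s_i f(e_l)). *)
Lemma coord_rel_sf i d : rel (s i * f d) (g i * d).
Proof.
have [z [zc ->]] := e_span d.
rewrite rmorph_sum !mulr_sumr; apply: coord_rel_sum => l _.
rewrite rmorphM mulrA -(f_center (zc l) (s i)) -mulrA.
by rewrite (mulrA (g i)) -(zc l (g i)) -mulrA; apply: coord_relZ.
Qed.

Lemma coord_rel_mulf u k d : rel u k -> rel (u * f d) (k * d).
Proof.
move=> [c [-> ->]]; rewrite /lcomb !mulr_suml; apply: coord_rel_sum => i _.
by rewrite -!mulrA; apply/coord_relZ/coord_rel_sf.
Qed.

Lemma coord_rel_muls u k j : rel u k -> rel (u * s j) (k * g j).
Proof.
move=> [c [-> ->]]; rewrite /lcomb !mulr_suml; apply: coord_rel_sum => i _.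
by rewrite -!mulrA; apply/coord_relZ/rel_ss.
Qed.

Lemma coord_relM u k v k' : rel u k -> rel v k' -> rel (u * v) (k * k').
Proof.
move=> uk [c [-> ->]]; rewrite /lcomb !mulr_sumr; apply: coord_rel_sum => j _.
by rewrite !mulrA; apply/coord_rel_muls/coord_rel_mulf.
Qed.

Lemma lcomb_coordE (A : L -> Prop) c :
  is_divring L -> lfree f s -> divsubring_closed A -> (forall d, A (f d)) ->
  lspan f A s -> A (lcomb f c s) -> lcomb f c s = f (\sum_i c i * g i).
Proof.
move=> divL s_free [_ _ AB _ AI] Af s_span Au.
set u := lcomb f c s; set k := \sum_i _.
have rel_uk : rel (u - f k) 0.
  by rewrite -(subrr k); apply/coord_relD/coord_relN/coord_rel_f; exists c.
apply/eqP; rewrite -subr_eq0; apply: contraT => /divL uk_unit.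
have [d inv_d] := s_span _ (AI _ (AB _ _ Au (Af k))).
have := coord_relM rel_uk (ex_intro _ d (conj inv_d erefl)).
rewrite mulrV // mul0r => rel10.
by have /eqP := coord_rel_functional s_free rel11 rel10; rewrite oner_eq0.
Qed.

End CoordRel.

Section Transfer.
Variables (K L : unitRingType) (f : {rmorphism K -> L}).

Lemma ex_closed_coord_rel n (s : 'I_n -> L) m (e : 'I_m -> K) :
  ex_closed f ->
  (forall i j, exists c, s i * s j = lcomb f c s) ->
  (forall i l, exists c, s i * f (e l) = lcomb f c s) ->
  (exists c, 1 = lcomb f c s) ->
  exists g : 'I_n -> K,
    [/\ forall i j, coord_rel f s g (s i * s j) (g i * g j),
        forall i l, coord_rel f s g (s i * f (e l)) (g i * e l) &
        coord_rel f s g 1 1].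
Proof.
move=> exc ss se [o so].
have /fin_all_exists [a sa] :
  forall p : 'I_n * 'I_n, exists c, s p.1 * s p.2 = lcomb f c s by case.
have /fin_all_exists [b sb] :
  forall p : 'I_n * 'I_m, exists c, s p.1 * f (e p.2) = lcomb f c s by case.
have /eholds_exs [genv] : eholds (fun=> 0) (exs n (struct_form a b e o)).
  apply: exc; rewrite eform_map_exs eform_map_struct_form; apply/eholds_exs.
  exists (fun j => oapp s 0 (insub j)).
  have env_s (i : 'I_n) : (if (i < n)%N then oapp s 0 (insub (i : nat)) else 0) = s i.
    by rewrite ltn_ord valK.
  by apply/(eholds_struct_form _ _ _ _ env_s); split=> [i j | i l |];
    [apply: sa (i, j) | apply: sb (i, l) | apply: so].
pose g (i : 'I_n) := genv i.
have env_g (i : 'I_n) : (if (i < n)%N then genv i else 0) = g i by rewrite ltn_ord.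
move/(eholds_struct_form _ _ _ _ env_g) => [ga gb go].
exists g; split=> [i j | i l | ]; last by exists o.
- by exists (a (i, j)); rewrite -sa.
- by exists (b (i, l)); rewrite -sb.
Qed.

End Transfer.

Section Adjoin.
Variables (K L : unitRingType) (f : {rmorphism K -> L}).

Lemma adjoin_closed x : divsubring_closed (adjoin f x).
Proof.
split=> [S [] | S [] | u v Ku Kv S SC | u v Ku Kv S SC | u Ku S SC] //;
  move=> Sf Sx; have Su := Ku S SC Sf Sx; case: (SC) => _ _ SB SM SI.
- by apply: SB => //; apply: Kv.
- by apply: SM => //; apply: Kv.
- exact: SI.
Qed.

Lemma adjoin_f x k : adjoin f x (f k). Proof. by move=> S _ Sf _. Qed.

Lemma adjoin_x x : adjoin f x x. Proof. by move=> S _ _ Sx. Qed.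

End Adjoin.

Arguments adjoin_f {K L} f x k.
Arguments adjoin_x {K L} f x.

Theorem theorem2 (K L : unitRingType) (f : {rmorphism K -> L}) :
  is_divring K -> is_divring L ->
  findim_over_center K ->
  ex_closed f -> center_incl f ->
  regular_ext f.
Proof.
move=> divK divL [es es_span] exc f_center x [[s [s_adj s_span]] _].
pose e (l : 'I_(size es)) := es`_l.
have e_span d :
    exists z : 'I_(size es) -> K, (forall l, central (z l)) /\ d = \sum_l z l * e l.
  by have [z [_ [zc ->]]] := es_span d; exists (fun l => z`_l).
have Kx := adjoin_closed f x; case: (Kx) => _ Kx1 _ KxM _.
have s_lspan : lspan f (adjoin f x) (fun i : 'I_(size s) => s`_i).
  by move=> y /s_span [c [_ ->]]; exists (fun i => c`_i).
have [n [t [t_adj t_span t_free]]] :=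
  exists_lbasis divK (fun i => s_adj i (ltn_ord i)) s_lspan.
have [g [rel_ss rel_se rel11]] := ex_closed_coord_rel (e := e) exc
  (fun i j => t_span _ (KxM _ _ (t_adj i) (t_adj j)))
  (fun i l => t_span _ (KxM _ _ (t_adj i) (adjoin_f f x _))) (t_span _ Kx1).
have [c x_c] := t_span x (adjoin_x f x).
exists (\sum_i c i * g i); rewrite x_c.
apply: (lcomb_coordE f_center e_span rel_ss rel_se rel11 divL t_free Kx (adjoin_f f x)).
  exact: t_span.
by rewrite -x_c; apply: adjoin_x.
Qed.
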